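(* Let $\mathcal H$ be a Hilbert space of dimension $d$, let $H(t_i)=\sum_l E^i_l\Pi^i_l$ and $H(t_f)=\sum_k E^f_k\Pi^f_k$ be Hermitian operators with spectral projectors $\Pi^i_l,\Pi^f_k$, let $\Phi$ be a CPTP map on $\mathcal H$ and $\beta>0$. Let $\gamma_{\beta,i}=e^{-\beta H(t_i)}/\mathcal Z_{\beta,i}$, $\gamma_{\beta,f}=e^{-\beta H(t_f)}/\mathcal Z_{\beta,f}$, $\Delta F=-\beta^{-1}\ln(\mathcal Z_{\beta,f}/\mathcal Z_{\beta,i})$. Let $\rho_i$ be a density operator decomposed as $$\rho_i=(1-a)\gamma_{\beta,i}+a(1-c)\tau_d+ac\,\tau_c,$$ where $a$ is the weight of athermality of $\rho_i$ with respect to $\gamma_{\beta,i}$ with minimal athermal state $\tau$, and $\tau=(1-c)\tau_d+c\tau_c$ with $c$ the weight of coherence of $\tau$ with respect to the eigenbasis of $H(t_i)$, $\tau_d$ a density operator diagonal in that basis and $\tau_c$ a density operator. Then the EPM average satisfies $$\big\langle e^{-\beta(\Delta E-\Delta F)}\big\rangle=\Big\{(1-a)d+a(1-c)\mathrm{Tr}(\gamma_{\beta,i}^{-1}\tau_d)+ac\,\mathrm{Tr}(\gamma_{\beta,i}^{-1}\tau_c)\Big\}\Big\{(1-a)\mathrm{Tr}(\gamma_{\beta,f}\Phi[\gamma_{\beta,i}])+a(1-c)\mathrm{Tr}(\gamma_{\beta,f}\Phi[\tau_d])+ac\,\mathrm{Tr}(\gamma_{\beta,f}\Phi[\tau_c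])\Big\}.$$
   Context: EPM statistics: for initial state $\rho_i$, $p^{l,k}=\mathrm{Tr}(\rho_i\Pi^i_l)\mathrm{Tr}(\Phi[\rho_i]\Pi^f_k)$, $\Delta E_{l,k}=E^f_k-E^i_l$, and $\langle g(\Delta E)\rangle=\sum_{l,k}p^{l,k}g(\Delta E_{l,k})$. Weight of athermality: $A_w(\rho)=\min_{\tau\in\mathscr D(\mathcal H)}\{a\ge0:\rho=(1-a)\gamma_{\beta,i}+a\tau\}$ ($\mathscr D(\mathcal H)$ = density operators); $\tau$ attaining it is the minimal athermal state. Weight of coherence with respect to a fixed basis: $C_w(\tau)=\min\{c\ge0:\tau=(1-c)\sigma+c\tau',\ \sigma \text{ diagonal in the basis},\ \tau'\in\mathscr D(\mathcal H)\}$, with $\tau_d=\sigma$, $\tau_c=\tau'$ an optimal pair. *)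

From HB Require Import structures.
From mathcomp Require Import all_boot all_order all_algebra.
From mathcomp Require Import all_classical all_reals.
From mathcomp.analysis Require Import sequences exp.
From mathcomp Require Import complex.
Set Implicit Arguments. Unset Strict Implicit. Unset Printing Implicit Defensive.
Import Order.TTheory GRing.Theory Num.Theory.
Local Open Scope ring_scope.
Local Open Scope complex_scope.

Section QDefs.
Variable R : realType.
Local Notation C := R[i].
Variable d : nat.

Definition adjmx (A : 'M[C]_d) : 'M[C]_d := (map_mx Num.conj A)^T.
Definition adjcv (v : 'cV[C]_d) : 'rV[C]_d := (map_mx Num.conj v)^T.

(* positive semidefinite: <v, A v> is real nonnegative for every v *)
Definition psd (A : 'M[C]_d) : Prop := forall v : 'cV[C]_d, 0 <= (adjcv v *m A *m v) 0 0.

Definition density (A : 'M[C]_d) : Prop := psd A /\ \tr A = 1.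

Definition unitary (U : 'M[C]_d) : Prop := adjmx U *m U = 1%:M.

(* A is diagonal in the orthonormal basis given by the columns of U *)
Definition diag_in (U A : 'M[C]_d) : Prop := is_diag_mx (adjmx U *m A *m U).

(* Positive semidefiniteness of the n x n block operator with blocks X a b,
   written out literally. *)
Definition block_psd (n : nat) (X : 'I_n -> 'I_n -> 'M[C]_d) : Prop :=
  forall v : 'I_n -> 'cV[C]_d,
    0 <= \sum_(a < n) \sum_(b < n) (adjcv (v a) *m X a b *m v b) 0 0.

Definition CPTP (Phi : {linear 'M[C]_d -> 'M[C]_d}) : Prop :=
  (forall n (X : 'I_n -> 'I_n -> 'M[C]_d),
      block_psd X -> block_psd (fun a b => Phi (X a b)))
  /\ (forall A, \tr (Phi A) = \tr A).

Definition spectral (m : nat) (E : 'I_m -> R) (P : 'I_m -> 'M[C]_d) : Prop :=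
  injective E
  /\ (forall l, adjmx (P l) = P l)
  /\ (forall l l', P l *m P l' = if l == l' then P l else 0)
  /\ (forall l, P l != 0)
  /\ \sum_(l < m) P l = 1%:M.

Definition spec_fun (m : nat) (E : 'I_m -> R) (P : 'I_m -> 'M[C]_d) (f : R -> R)
  : 'M[C]_d := \sum_(l < m) (f (E l))%:C *: P l.

Definition hamiltonian m (E : 'I_m -> R) P := spec_fun E P id.

Definition partZ m (E : 'I_m -> R) P (beta : R) : R :=
  complex.Re (\tr (spec_fun E P (fun x => expR (- beta * x)))).

Definition gibbs m (E : 'I_m -> R) P (beta : R) : 'M[C]_d :=
  ((partZ E P beta)^-1)%:C *: spec_fun E P (fun x => expR (- beta * x)).

Definition freeEnergyDiff mi (Ei : 'I_mi -> R) Pi mf (Ef : 'I_mf -> R) Pf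
  (beta : R) : R :=
  - beta^-1 * ln (partZ Ef Pf beta / partZ Ei Pi beta).

Definition epm_p mi (Pi : 'I_mi -> 'M[C]_d) mf (Pf : 'I_mf -> 'M[C]_d)
  (Phi : {linear 'M[C]_d -> 'M[C]_d}) (rho : 'M[C]_d) (l : 'I_mi) (k : 'I_mf) : C :=
  \tr (rho *m Pi l) * \tr (Phi rho *m Pf k).

Definition epm_avg mi (Ei : 'I_mi -> R) Pi mf (Ef : 'I_mf -> R) Pf
  Phi rho (g : R -> R) : C :=
  \sum_(l < mi) \sum_(k < mf) epm_p Pi Pf Phi rho l k * (g (Ef k - Ei l))%:C.

Definition weight_athermality (rho gam : 'M[C]_d) (a : R) (tau : 'M[C]_d) : Prop :=
  [/\ 0 <= a, density tau, rho = (1 - a)%:C *: gam + a%:C *: tau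
   & forall (a' : R) (tau' : 'M[C]_d), 0 <= a' -> density tau' ->
       rho = (1 - a')%:C *: gam + a'%:C *: tau' -> a <= a'].

Definition weight_coherence (U tau : 'M[C]_d) (c : R) (sig tau' : 'M[C]_d) : Prop :=
  [/\ 0 <= c, density sig /\ diag_in U sig, density tau',
      tau = (1 - c)%:C *: sig + c%:C *: tau'
   & forall (c' : R) (s2 t2 : 'M[C]_d), 0 <= c' -> density s2 -> diag_in U s2 ->
       density t2 -> tau = (1 - c')%:C *: s2 + c'%:C *: t2 -> c <= c'].

End QDefs.

From HB Require Import structures.
From mathcomp Require Import all_boot all_order all_algebra.
From mathcomp Require Import all_classical all_reals.
From mathcomp.analysis Require Import sequences exp.
From mathcomp Require Import complex.
From mathcomp Require Import ring.
Import Order.TTheory GRing.Theory Num.Theory.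
Local Open Scope ring_scope.
Local Open Scope complex_scope.

(* The EPM weight factorises: with Delta F = -beta^-1 ln (Z_f / Z_i),
   exp (-beta (E^f_k - E^i_l - Delta F)) = (Z_i e^{beta E^i_l}) (Z_f^-1 e^{-beta E^f_k}).
   Hence the double sum splits into Tr (gamma_i^-1 rho) * Tr (gamma_f Phi[rho]),
   since gamma_i^-1 = Z_i e^{beta H_i} by the spectral calculus. Both factors are
   linear in rho; inserting rho = (1-a) gamma_i + a (1-c) tau_d + a c tau_c and
   Tr (gamma_i^-1 gamma_i) = d gives the formula. *)

Lemma mxtrace_adjmx_mul_gt0 (R : realType) n (A : 'M[R[i]]_n) :
  A != 0 -> 0 < \tr (adjmx A *m A).
Proof.
move=> /matrix0Pn [j [i Aji_neq0]].
have -> : \tr (adjmx A *m A) = \sum_i \sum_j `|A j i| ^+ 2.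
  rewrite /mxtrace; apply: eq_bigr => i' _; rewrite mxE.
  by apply: eq_bigr => j' _; rewrite !mxE normCKC.
have sq_ge0 (x : R[i]) : 0 <= `|x| ^+ 2 by rewrite exprn_ge0.
rewrite (bigD1 i) //= (bigD1 j) //= -addrA ltr_wpDr ?exprn_gt0 ?normr_gt0 //.
by rewrite addr_ge0 // sumr_ge0 // => *; rewrite sumr_ge0.
Qed.

Lemma mxtrace_orthoproj_gt0 (R : realType) n (P : 'M[R[i]]_n) :
  adjmx P = P -> P *m P = P -> P != 0 -> 0 < \tr P.
Proof.
by move=> P_herm P_idem P_neq0; rewrite -{1}P_idem -{1}P_herm mxtrace_adjmx_mul_gt0.
Qed.

Section SpectralCalculus.
Variables (R : realType) (d m : nat) (E : 'I_m -> R) (P : 'I_m -> 'M[R[i]]_d).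

Lemma mxtrace_spec_funMl f X :
  \tr (spec_fun E P f *m X) = \sum_l \tr (X *m P l) * (f (E l))%:C.
Proof.
rewrite /spec_fun mulmx_suml raddf_sum /=; apply: eq_bigr => l _.
by rewrite -scalemxAl mxtraceZ mxtrace_mulC mulrC.
Qed.

Hypothesis P_spectral : spectral E P.

Lemma spec_funM f g :
  spec_fun E P f *m spec_fun E P g = spec_fun E P (fun x => f x * g x).
Proof.
have [_ [_ [P_orth _]]] := P_spectral.
rewrite /spec_fun mulmx_suml; apply: eq_bigr => l _.
rewrite mulmx_sumr (bigD1 l) //= big1 => [|l' l'_neq_l].
  by rewrite -scalemxAl -scalemxAr P_orth eqxx scalerA -rmorphM addr0.
by rewrite -scalemxAl -scalemxAr P_orth eq_sym (negbTE l'_neq_l) !scaler0.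
Qed.

Lemma spec_fun1 : spec_fun E P (fun=> 1) = 1%:M.
Proof.
have [_ [_ [_ [_ P_sum1]]]] := P_spectral.
by rewrite -P_sum1; apply: eq_bigr => l _; rewrite rmorph1 scale1r.
Qed.

Section Inverse.
Variables f g : R -> R.
Hypothesis fgK : forall x, f x * g x = 1.

Lemma spec_fun_mulmxV : spec_fun E P f *m spec_fun E P g = 1%:M.
Proof. by rewrite spec_funM -spec_fun1; apply: eq_bigr => l _; rewrite fgK. Qed.

Lemma spec_fun_unitmx : spec_fun E P f \in unitmx.
Proof. by have [] := mulmx1_unit spec_fun_mulmxV. Qed.

Lemma invmx_spec_fun : invmx (spec_fun E P f) = spec_fun E P g.
Proof. by rewrite -[RHS](mulKmx spec_fun_unitmx) spec_fun_mulmxV mulmx1. Qed.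

End Inverse.

Lemma mxtrace_spec_fun_gt0 f :
  (0 < d)%N -> (forall x, 0 < f x) -> 0 < \tr (spec_fun E P f).
Proof.
move=> d_gt0 f_gt0; have [_ [P_herm [P_orth [P_neq0 P_sum1]]]] := P_spectral.
have l0 : 'I_m.
  case: m E P P_sum1 => [? ? | ? _ _ _]; last exact: ord0.
  move=> /matrixP /(_ (Ordinal d_gt0) (Ordinal d_gt0)).
  by rewrite big_ord0 !mxE eqxx => /eqP; rewrite eq_sym oner_eq0.
have term_gt0 l : 0 < (f (E l))%:C * \tr (P l).
  by rewrite mulr_gt0 ?ltcR // mxtrace_orthoproj_gt0 // P_orth eqxx.
rewrite /spec_fun raddf_sum /= (bigD1 l0) //= mxtraceZ ltr_wpDr ?term_gt0 //.
by apply: sumr_ge0 => l _; rewrite mxtraceZ ltW.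
Qed.

Lemma partZ_gt0 beta : (0 < d)%N -> 0 < partZ E P beta.
Proof.
move=> d_gt0; have := mxtrace_spec_fun_gt0 (fun x => expR (- beta * x)) d_gt0.
by rewrite ltcE /partZ => /(_ (fun x => expR_gt0 _)) /andP [].
Qed.

Lemma gibbs_spec_fun beta :
  gibbs E P beta = spec_fun E P (fun x => (partZ E P beta)^-1 * expR (- beta * x)).
Proof.
rewrite /gibbs /spec_fun scaler_sumr; apply: eq_bigr => l _.
by rewrite scalerA rmorphM.
Qed.

Section Gibbs.
Variable beta : R.
Hypothesis d_gt0 : (0 < d)%N.

Let gibbs_inv_factor x :
  (partZ E P beta)^-1 * expR (- beta * x) * (partZ E P beta * expR (beta * x)) = 1.
Proof.
by rewrite mulrACA mulVf ?gt_eqF ?partZ_gt0 // mul1r -expRD mulNr addNr expR0.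
Qed.

Lemma gibbs_unitmx : gibbs E P beta \in unitmx.
Proof. by rewrite gibbs_spec_fun (spec_fun_unitmx _ _ gibbs_inv_factor). Qed.

Lemma invmx_gibbs :
  invmx (gibbs E P beta) = spec_fun E P (fun x => partZ E P beta * expR (beta * x)).
Proof. by rewrite gibbs_spec_fun (invmx_spec_fun _ _ gibbs_inv_factor). Qed.

End Gibbs.

End SpectralCalculus.

Lemma epm_avg_separable (R : realType) d mi (Ei : 'I_mi -> R) Pi mf (Ef : 'I_mf -> R) Pf
    (Phi : {linear 'M[R[i]]_d -> 'M[R[i]]_d}) rho (g u v : R -> R) :
  (forall x y, g (y - x) = u x * v y) ->
  epm_avg Ei Pi Ef Pf Phi rho g =
    \tr (spec_fun Ei Pi u *m rho) * \tr (spec_fun Ef Pf v *m Phi rho).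
Proof.
move=> g_split; rewrite !mxtrace_spec_funMl mulr_suml; apply: eq_bigr => l _.
rewrite mulr_sumr; apply: eq_bigr => k _.
by rewrite /epm_p g_split rmorphM mulrACA.
Qed.

Lemma expR_free_energy_split (R : realType) (beta Zi Zf x y : R) :
  beta != 0 -> 0 < Zi -> 0 < Zf ->
  expR (- beta * (y - x - - beta^-1 * ln (Zf / Zi))) =
    (Zi * expR (beta * x)) * (Zf^-1 * expR (- beta * y)).
Proof.
move=> beta_neq0 Zi_gt0 Zf_gt0.
have -> : - beta * (y - x - - beta^-1 * ln (Zf / Zi)) =
          - beta * y + beta * x - ln (Zf / Zi) by field.
rewrite !expRD expRN lnK ?posrE ?divr_gt0 // invf_div.
ring.
Qed.

Theorem mainTheorem3 (R : realType) (d : nat)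
  (mi : nat) (Ei : 'I_mi -> R) (Pi : 'I_mi -> 'M[R[i]]_d)
  (mf : nat) (Ef : 'I_mf -> R) (Pf : 'I_mf -> 'M[R[i]]_d)
  (Phi : {linear 'M[R[i]]_d -> 'M[R[i]]_d}) (beta : R)
  (U : 'M[R[i]]_d)
  (rho tau taud tauc : 'M[R[i]]_d) (a c : R) :
  spectral Ei Pi -> spectral Ef Pf -> CPTP Phi -> 0 < beta ->
  unitary U -> diag_in U (hamiltonian Ei Pi) ->
  density rho ->
  weight_athermality rho (gibbs Ei Pi beta) a tau ->
  weight_coherence U tau c taud tauc ->
  let gi := gibbs Ei Pi beta in
  let gf := gibbs Ef Pf beta in
  let dF := freeEnergyDiff Ei Pi Ef Pf beta in
  epm_avg Ei Pi Ef Pf Phi rho (fun dE => expR (- beta * (dE - dF))) =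
    ((1 - a)%:C * d%:R
       + (a * (1 - c))%:C * \tr (invmx gi *m taud)
       + (a * c)%:C * \tr (invmx gi *m tauc))
  * ((1 - a)%:C * \tr (gf *m Phi gi)
       + (a * (1 - c))%:C * \tr (gf *m Phi taud)
       + (a * c)%:C * \tr (gf *m Phi tauc)).
Proof.
move=> Pi_spec Pf_spec _ beta_gt0 _ _ _ [_ _ rho_mix _] [_ _ _ tau_mix _] gi gf dF.
have [d0 | d_gt0] := posnP d.
  subst d; have tr0 (A : 'M[R[i]]_0) : \tr A = 0 by rewrite /mxtrace big_ord0.
  rewrite !tr0 !mulr0 !addr0 mul0r /epm_avg big1 // => l _.
  by rewrite big1 // => k _; rewrite /epm_p tr0 !mul0r.
rewrite (@epm_avg_separable _ _ _ _ _ _ _ _ _ _ _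
  (fun x => partZ Ei Pi beta * expR (beta * x))
  (fun y => (partZ Ef Pf beta)^-1 * expR (- beta * y))); last first.
  by move=> x y; rewrite expR_free_energy_split ?gt_eqF ?partZ_gt0.
have gi_unit : gi \in unitmx by exact: gibbs_unitmx.
rewrite -invmx_gibbs // -gibbs_spec_fun rho_mix tau_mix -/gi -/gf.
(* Opaque Gibbs states keep [linearZ] from unfolding them into scalar multiples. *)
clearbody gi gf; rewrite !linearD !linearZ /= mulVmx // mxtrace1 !rmorphM.
ring.
Qed.
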